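(* Let $G$ be a unit disk graph, let $\mathrm{IS}(G)$ be the independent set produced by Heuristic IS on $G$, and let $\mathrm{OPT}(G)$ be a maximum independent set of $G$. Then $|\mathrm{IS}(G)| \geq |\mathrm{OPT}(G)|/3$.
   Context: A graph $G$ is a unit disk graph if its vertices can be put in one-to-one correspondence with closed disks of radius $1$ in the plane so that two vertices are adjacent if and only if the corresponding disks intersect (tangent disks are considered to intersect). Every unit disk graph $H$ has a vertex $v$ such that every independent set in the subgraph of $H$ induced on the neighborhood $N(v)$ has at most $3$ vertices. Heuristic IS: starting with the empty set and the graph $G$, repeat until the current graph is empty: in the current graph $H$ (an induced subgraph of $G$), choose a vertex $v$ such that the subgraph of $H$ induced on $N_H(v)$ has no independent set of size more than $3$; add $v$ to the independent set; delete $v$ and all its neighbors in $H$ from $H$. *)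

From HB Require Import structures.
From mathcomp Require Import all_boot all_order all_algebra.
From mathcomp Require Import reals.
Set Implicit Arguments. Unset Strict Implicit. Unset Printing Implicit Defensive.
Import Order.TTheory GRing.Theory Num.Theory.
Local Open Scope ring_scope.

Definition simple_graph (T : finType) (e : rel T) : Prop :=
  symmetric e /\ irreflexive e.

(* Unit disk graph: vertices correspond one-to-one (injective centre map p)
   to closed disks of radius 1; two such disks intersect (tangency included)
   iff their centres are at Euclidean distance <= 2, i.e. squared
   distance <= 4. *)
Definition unit_disk_graph (R : realType) (T : finType) (e : rel T) : Prop :=
  exists p : T -> R * R, injective p /\
    forall u v : T, u != v ->
      (e u v <-> ((p u).1 - (p v).1) ^+ 2 + ((p u).2 - (p v).2) ^+ 2 <= 4).

Definition independent (T : finType) (e : rel T) (S : {set T}) : Prop :=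
  forall u v, u \in S -> v \in S -> ~~ e u v.

Definition maximum_independent (T : finType) (e : rel T) (S : {set T}) : Prop :=
  independent e S /\ forall S' : {set T}, independent e S' -> (#|S'| <= #|S|)%N.

Definition nbhd_in (T : finType) (e : rel T) (H : {set T}) (v : T) : {set T} :=
  [set u in H | e v u].

(* heuristic_IS e H I : I is a possible output of Heuristic IS started
   with the empty set on the induced subgraph G[H] (all choices allowed). *)
Inductive heuristic_IS (T : finType) (e : rel T) : {set T} -> {set T} -> Prop :=
| hIS_done : heuristic_IS e set0 set0
| hIS_step : forall (H I : {set T}) (v : T),
    v \in H ->
    (forall S : {set T}, S \subset nbhd_in e H v -> independent e S -> #|S| <= 3)%N ->
    heuristic_IS e (H :\: (v |: nbhd_in e H v)) I ->
    heuristic_IS e H (v |: I).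

From HB Require Import structures.
From mathcomp Require Import all_boot all_order all_algebra.
From mathcomp Require Import reals.
Set Implicit Arguments. Unset Strict Implicit. Unset Printing Implicit Defensive.
Import Order.TTheory GRing.Theory Num.Theory.
Local Open Scope ring_scope.

(* Every vertex v picked by the heuristic removes v together with its
   neighbourhood N(v), and any independent set meets v |: N(v) in at most 3
   vertices: in {v} if it contains v, otherwise in an independent subset of
   N(v), which has at most 3 elements by the choice of v. Summing over the
   steps, an independent set has at most 3 |IS| vertices. The unit disk
   hypothesis only guarantees that a vertex can always be chosen; the bound
   itself holds for every run of the heuristic on any graph. *)

Section HeuristicIS.

Variables (T : finType) (e : rel T).

Lemma independent_sub (S S' : {set T}) :
  S' \subset S -> independent e S -> independent e S'.
Proof. by move=> sS'S iS x y /(subsetP sS'S) xS /(subsetP sS'S); apply: iS. Qed.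

Lemma heuristic_IS_sub (H I : {set T}) : heuristic_IS e H I -> I \subset H.
Proof.
elim=> [|{}H {}I v vH _ _ sIH]; first exact: sub0set.
by rewrite subUset sub1set vH (subset_trans sIH) ?subsetDl.
Qed.

Lemma card_independent_closed_nbhd (H S : {set T}) (v : T) :
  (forall S' : {set T}, S' \subset nbhd_in e H v -> independent e S' ->
     #|S'| <= 3)%N ->
  independent e S -> (#|S :&: (v |: nbhd_in e H v)| <= 3)%N.
Proof.
move=> small_nbhd iS.
have iSN := independent_sub (subsetIl S (v |: nbhd_in e H v)) iS.
have [vS|vNS] := boolP (v \in S).
  suff -> : S :&: (v |: nbhd_in e H v) = [set v] by rewrite cards1.
  apply/setP => x; rewrite !inE; case: eqVneq => [->|xv]; first by rewrite vS.
  by apply/and3P => -[xS _ evx]; move: (iS v x vS xS); rewrite evx.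
apply: (small_nbhd _ _ iSN); apply/subsetP => x /setIP [xS].
rewrite !inE => /orP [/eqP xv|//]; by move: xS; rewrite xv (negPf vNS).
Qed.

Lemma heuristic_IS_card_independent (H I : {set T}) :
  heuristic_IS e H I ->
  forall S : {set T}, S \subset H -> independent e S -> (#|S| <= 3 * #|I|)%N.
Proof.
elim=> [|{}H {}I v vH small_nbhd runI IH] S sSH iS.
  by move: sSH; rewrite subset0 => /eqP ->; rewrite cards0.
set C := v |: nbhd_in e H v.
have vNI : v \notin I.
  by apply: contraTN vH => /(subsetP (heuristic_IS_sub runI)); rewrite !inE eqxx.
rewrite cardsU1 vNI mulnDr muln1 -(cardsID C S) leq_add //.
  exact: card_independent_closed_nbhd.
apply: IH; last exact: independent_sub (subsetDl S C) iS.
by rewrite setSD.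
Qed.

End HeuristicIS.

Theorem theorem4p7 (R : realType) (T : finType) (e : rel T)
  (hG : simple_graph e) (hUDG : unit_disk_graph R e)
  (IS OPT : {set T}) (hIS : heuristic_IS e [set: T] IS)
  (hOPT : maximum_independent e OPT) :
  (#|OPT|%:R / 3 : R) <= #|IS|%:R.
Proof.
have OPT_le := heuristic_IS_card_independent hIS (subsetT OPT) hOPT.1.
by rewrite ler_pdivrMr // -natrM ler_nat mulnC.
Qed.
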